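(* Let $\Theta_0,\Theta_1$ be quantum channels from a finite-dimensional system $A$ to a finite-dimensional system $B$, and $\lambda\in[0,1]$. Suppose one receives a single use of a channel that equals $\Theta_0$ with probability $\lambda$ and $\Theta_1$ with probability $1-\lambda$, and one may prepare any state $\sigma$ on $A\otimes C$ for any finite-dimensional ancilla $C$, apply the unknown channel tensored with the identity on $C$, and then perform only an incoherent measurement on $B\otimes C$ (a POVM all of whose elements are diagonal in the incoherent product basis), guessing $i\in\{0,1\}$. The optimal probability $P_c(\lambda,\Theta_0,\Theta_1)$ of guessing $i$ correctly is $$P_c(\lambda,\Theta_0,\Theta_1)=\frac12+\frac12\max_{|\psi\rangle}\|T(|\psi\rangle\langle\psi|)\|_1,\qquad T=\Delta\big[\lambda\Theta_0-(1-\lambda)\Theta_1\big],$$ where the maximum is over pure states on $A$.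
   Context: Every finite-dimensional system carries a fixed orthonormal incoherent basis; composite systems use the product basis. $\Delta(\rho)=\sum_i|i\rangle\langle i|\rho|i\rangle\langle i|$ is the total dephasing map. $\|X\|_1=\operatorname{tr}\sqrt{X^\dagger X}$ is the trace norm. *)

From HB Require Import structures.
From mathcomp Require Import all_boot all_order all_algebra.
From mathcomp Require Import complex mxtens.
From mathcomp Require Import boolp classical_sets reals.
Set Implicit Arguments. Unset Strict Implicit. Unset Printing Implicit Defensive.
Import Order.TTheory GRing.Theory Num.Theory.
Local Open Scope ring_scope.

Section QDefs.
Variable R : realType.
Local Notation C := R[i].

Definition adj {m n} (A : 'M[C]_(m, n)) : 'M[C]_(n, m) :=
  \matrix_(i, j) (A j i)^*.

(* positive semidefinite: <v, A v> is a nonnegative real for every v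
   (over C this entails hermiticity; we also require it explicitly) *)
Definition psd {n} (A : 'M[C]_n) : Prop :=
  adj A = A /\ forall v : 'cV[C]_n, 0 <= (adj v *m A *m v) 0 0.

Definition is_state {n} (rho : 'M[C]_n) : Prop := psd rho /\ \tr rho = 1.

Definition unit_vec {n} (psi : 'cV[C]_n) : Prop := (adj psi *m psi) 0 0 = 1.
Definition proj {n} (psi : 'cV[C]_n) : 'M[C]_n := psi *m adj psi.

(* trace norm ||X||_1 = tr sqrt(X^dagger X), where sqrt is the
   (unique) positive semidefinite square root *)
Definition trace_norm {n} (X : 'M[C]_n) : R :=
  xget 0 [set t : R | exists S : 'M[C]_n,
           psd S /\ S *m S = adj X *m X /\ (t%:C)%C = \tr S].

Definition dephase {n} (X : 'M[C]_n) : 'M[C]_n :=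
  \matrix_(i, j) ((i == j)%:R * X i j).

(* block (c,c') of a matrix on A (x) K (product index via mxtens_index) *)
Definition blk {m k} (X : 'M[C]_(m * k)) (c c' : 'I_k) : 'M[C]_m :=
  \matrix_(i, j) X (mxtens_index (i, c)) (mxtens_index (j, c')).

Definition tens_id {m n} k (Phi : 'M[C]_m -> 'M[C]_n) (X : 'M[C]_(m * k))
  : 'M[C]_(n * k) :=
  \matrix_(p, q) Phi (blk X (mxtens_unindex p).2 (mxtens_unindex q).2)
                     (mxtens_unindex p).1 (mxtens_unindex q).1.

Definition is_channel {m n} (Phi : 'M[C]_m -> 'M[C]_n) : Prop :=
  linear Phi /\
  (forall X, \tr (Phi X) = \tr X) /\
  (forall k (X : 'M[C]_(m * k)), psd X -> psd (tens_id Phi X)).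

Definition incoherent_povm {n} (M0 M1 : 'M[C]_n) : Prop :=
  psd M0 /\ psd M1 /\ is_diag_mx M0 /\ is_diag_mx M1 /\ M0 + M1 = 1%:M.

Definition success {m n k} (lam : R) (T0 T1 : 'M[C]_m -> 'M[C]_n)
  (sigma : 'M[C]_(m * k)) (M0 M1 : 'M[C]_(n * k)) : R :=
  lam * complex.Re (\tr (M0 *m tens_id T0 sigma))
  + (1 - lam) * complex.Re (\tr (M1 *m tens_id T1 sigma)).

Definition Pc {m n} (lam : R) (T0 T1 : 'M[C]_m -> 'M[C]_n) : R :=
  sup [set p : R | exists k (sigma : 'M[C]_(m * k)) (M0 M1 : 'M[C]_(n * k)),
         is_state sigma /\ incoherent_povm M0 M1 /\
         p = success lam T0 T1 sigma M0 M1].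

End QDefs.

From HB Require Import structures.
From mathcomp Require Import all_boot all_order all_algebra.
From mathcomp Require Import complex mxtens sesquilinear spectral.
From mathcomp Require Import boolp classical_sets reals.
From mathcomp Require Import ring lra.
Import Order.TTheory GRing.Theory Num.Theory.
Set Implicit Arguments. Unset Strict Implicit. Unset Printing Implicit Defensive.
Local Open Scope ring_scope.

(* The [b]-th diagonal entry [bias b rho] of [(lam Theta0 - (1 - lam) Theta1) rho]
   is real for [rho >= 0], so the trace norm of [T rho] is
   [sum_b |bias b rho|].  An incoherent measurement only sees the diagonal of
   the output on [B (x) C], so outcome by outcome its success probability is a
   convex combination of the two weighted likelihoods.  It is thus at most the
   sum of their maxima, [1/2 + 1/2 sum_c sum_b |bias b sigma_cc|], with
   equality for the measurement guessing the larger one.  Finally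
   [rho |-> sum_b |bias b rho|] is the maximum of the finitely many linear
   functionals [Re (sum_b +-bias b rho)]; each is bounded on states by the top
   eigenvalue of the hermitian part of its matrix, attained at a pure state,
   and the best of these pure states [psi0] satisfies
   [sum_b |bias b rho| <= (sum_b |bias b psi0|) tr rho] for every [rho >= 0].
   This bounds every strategy, and the bound is attained without ancilla. *)

Lemma sup_eq_max (R : realType) (S : set R) (v : R) : S v -> ubound S v -> sup S = v.
Proof.
move=> Sv v_ub; apply/le_anti/andP; split; first by apply: ge_sup => //; exists v.
by apply: sup_upper_bound => //; split; exists v.
Qed.

Section LinearProp.
Variables (S : pzRingType) (U V : lmodType S) (f : U -> V).
Hypothesis f_lin : linear f.

Lemma linear_prop0 : f 0 = 0.
Proof.
apply: (@addrI _ (f 0)); rewrite addr0.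
by have := f_lin 1 0 0; rewrite !scale1r !addr0.
Qed.

Lemma linear_propD u v : f (u + v) = f u + f v.
Proof. by have := f_lin 1 u v; rewrite !scale1r. Qed.

Lemma linear_propZ a u : f (a *: u) = a *: f u.
Proof. by have := f_lin a u 0; rewrite linear_prop0 !addr0. Qed.

End LinearProp.

Section ComplexScalars.
Variable R : realType.
Implicit Types (x y : R[i]) (r s : R).

Lemma ReD x y : complex.Re (x + y) = complex.Re x + complex.Re y.
Proof. by case: x y => a b [c d]. Qed.

Lemma ReN x : complex.Re (- x) = - complex.Re x.
Proof. by case: x. Qed.

Lemma ReB x y : complex.Re (x - y) = complex.Re x - complex.Re y.
Proof. by rewrite ReD ReN. Qed.

Lemma Re_sum (I : finType) (F : I -> R[i]) :
  complex.Re (\sum_i F i) = \sum_i complex.Re (F i).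
Proof. exact: (big_morph _ ReD). Qed.

Lemma Re_realM r x : complex.Re (r%:C%C * x) = r * complex.Re x.
Proof. by case: x => a b /=; rewrite mul0r subr0. Qed.

Lemma Re_ge0 x : 0 <= x -> 0 <= complex.Re x.
Proof. by case: x => a b; rewrite lecE /= => /andP[]. Qed.

Lemma Re_diag_mul x y : complex.Im x = 0 ->
  complex.Re (x * y) = complex.Re x * complex.Re y.
Proof. by case: x y => a b [c d] /= ->; rewrite mul0r subr0. Qed.

Lemma normc_real r : `|r%:C%C| = `|r|%:C%C.
Proof. by rewrite normc_def /= expr0n addr0 sqrtr_sqr. Qed.

End ComplexScalars.

Section Adjoint.
Variable R : realType.
Local Notation C := R[i].

Lemma adjE m n (A : 'M[C]_(m, n)) : adj A = (map_mx Num.conj A)^T.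
Proof. by apply/matrixP => i j; rewrite !mxE. Qed.

Lemma adjM m n p (A : 'M[C]_(m, n)) (B : 'M[C]_(n, p)) :
  adj (A *m B) = adj B *m adj A.
Proof. by rewrite !adjE map_mxM trmx_mul. Qed.

Lemma adjK m n (A : 'M[C]_(m, n)) : adj (adj A) = A.
Proof. by apply/matrixP => i j; rewrite !mxE conjCK. Qed.

Lemma adjD m n (A B : 'M[C]_(m, n)) : adj (A + B) = adj A + adj B.
Proof. by apply/matrixP => i j; rewrite !mxE rmorphD. Qed.

Lemma adjZ m n (a : C) (A : 'M[C]_(m, n)) : adj (a *: A) = a^* *: adj A.
Proof. by apply/matrixP => i j; rewrite !mxE rmorphM. Qed.

Lemma adj1 n : adj (1%:M : 'M[C]_n) = 1%:M.
Proof. by apply/matrixP => i j; rewrite !mxE eq_sym conjC_nat. Qed.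

Lemma mxtrace_adj n (A : 'M[C]_n) : \tr (adj A) = (\tr A)^*.
Proof. by rewrite /mxtrace rmorph_sum; apply: eq_bigr => i _; rewrite mxE. Qed.

Lemma adj_delta m n (i : 'I_m) (j : 'I_n) :
  adj (delta_mx i j : 'M[C]_(m, n)) = delta_mx j i.
Proof. by apply/matrixP => a b; rewrite !mxE conjC_nat andbC. Qed.

Lemma form_delta n (Y : 'M[C]_n) (p : 'I_n) :
  (adj (delta_mx p 0 : 'cV[C]_n) *m Y *m (delta_mx p 0 : 'cV[C]_n)) 0 0 = Y p p.
Proof. by rewrite adj_delta -rowE -colE !mxE. Qed.

Lemma form_ge0 n (v : 'cV[C]_n) : 0 <= (adj v *m v) 0 0.
Proof.
rewrite mxE; apply: sumr_ge0 => i _; rewrite mxE mulrC; exact: mul_conjC_ge0.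
Qed.

Lemma gram_diag_eq0 m n (E : 'M[C]_(m, n)) j :
  (adj E *m E) j j = 0 -> forall k, E k j = 0.
Proof.
rewrite mxE => sum0 k.
have ge0 i : true -> 0 <= adj E j i * E i j.
  by rewrite mxE mulrC => _; exact: mul_conjC_ge0.
have /(_ k isT) := psumr_eq0P ge0 sum0.
by rewrite mxE mulrC => /eqP; rewrite mul_conjC_eq0 => /eqP.
Qed.

End Adjoint.

Section PositiveSemidefinite.
Variable R : realType.
Local Notation C := R[i].

Lemma psd_mulmx_adj n p (V : 'M[C]_(p, n)) (rho : 'M[C]_n) :
  psd rho -> psd (V *m rho *m adj V).
Proof.
case=> herm form_rho; split; first by rewrite !adjM adjK herm mulmxA.
by move=> v; have := form_rho (adj V *m v); rewrite !adjM adjK !mulmxA.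
Qed.

Lemma psd_adj_mulmx n p (E : 'M[C]_(n, p)) (S : 'M[C]_n) :
  psd S -> psd (adj E *m S *m E).
Proof. by move=> /(psd_mulmx_adj (adj E)); rewrite adjK. Qed.

Lemma psd_diag_ge0 n (Y : 'M[C]_n) (p : 'I_n) : psd Y -> 0 <= Y p p.
Proof. by case=> _ /(_ (delta_mx p 0)); rewrite form_delta. Qed.

Lemma psd1 n : psd (1%:M : 'M[C]_n).
Proof. by split=> [|v]; [exact: adj1 | rewrite mulmx1; exact: form_ge0]. Qed.

Lemma psd_proj n (psi : 'cV[C]_n) : psd (proj psi).
Proof. by rewrite /proj -{1}(mulmx1 psi); apply/psd_mulmx_adj/psd1. Qed.

Lemma mxtrace_proj n (psi : 'cV[C]_n) : \tr (proj psi) = (adj psi *m psi) 0 0.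
Proof. by rewrite /proj mxtrace_mulC /mxtrace big_ord1. Qed.

Lemma psd_diag_mx n (d : 'rV[C]_n) : (forall i, 0 <= d 0 i) -> psd (diag_mx d).
Proof.
move=> d_ge0; split.
  apply/matrixP => i j; rewrite !mxE.
  by case: eqVneq => [->|_]; rewrite ?mulr1n ?geC0_conj // !mulr0n conjC0.
move=> v; rewrite mxE; apply: sumr_ge0 => i _.
rewrite mul_mx_diag !mxE mulrAC; apply: mulr_ge0 => //.
by rewrite mulrC; exact: mul_conjC_ge0.
Qed.

Lemma mxtrace_psd_ge0 n (rho : 'M[C]_n) : psd rho -> 0 <= \tr rho.
Proof. by move=> rho_psd; apply: sumr_ge0 => i _; exact: psd_diag_ge0. Qed.

(* If [d j > 0], then [E := S - diag_mx d] satisfies [S E + E diag_mx d = 0],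
   and the [(j, j)] entry of [adj E (S E + E diag_mx d)] is a sum of two
   nonnegative terms, which forces column [j] of [E] to vanish. *)
Lemma psd_sqrt_diag n (S : 'M[C]_n) (d : 'rV[C]_n) :
  psd S -> (forall i, 0 <= d 0 i) -> S *m S = diag_mx d *m diag_mx d ->
  forall j, S j j = d 0 j.
Proof.
move=> S_psd d_ge0 SS j; have [herm _] := S_psd.
have := d_ge0 j; rewrite le_eqVlt => /orP[/eqP d0 | d_gt0].
  rewrite -d0; apply: (gram_diag_eq0 (E := S)).
  by rewrite herm SS mul_mx_diag !mxE eqxx -d0 mulr0.
set L := diag_mx d; set E := S - L.
have SE : S *m E + E *m L = 0 by rewrite mulmxBr mulmxBl SS addrA subrK subrr.
have : (adj E *m S *m E) j j + (adj E *m E *m L) j j = 0.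
  have /matrixP/(_ j j) : adj E *m S *m E + adj E *m E *m L = 0.
    by rewrite -!mulmxA -mulmxDr SE mulmx0.
  by rewrite !mxE.
rewrite mul_mx_diag [X in _ + X]mxE => /eqP.
have EE_ge0 : 0 <= (adj E *m E) j j.
  by have := psd_diag_ge0 j (psd_adj_mulmx E (psd1 n)); rewrite mulmx1.
have ESE_ge0 : 0 <= (adj E *m S *m E) j j by apply/psd_diag_ge0/psd_adj_mulmx.
rewrite paddr_eq0 // ?mulr_ge0 // ?ltW //.
case/andP=> _; rewrite mulf_eq0 (gt_eqF d_gt0) orbF => /eqP /gram_diag_eq0/(_ j).
by rewrite !mxE eqxx mulr1n => /eqP; rewrite subr_eq0 => /eqP.
Qed.

Lemma trace_norm_dephase n (Y : 'M[C]_n) :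
  trace_norm (dephase Y) = \sum_i complex.Re `|Y i i|.
Proof.
set d := \row_i `|Y i i| : 'rV[C]_n.
have d_ge0 i : 0 <= d 0 i by rewrite mxE.
have DD : adj (dephase Y) *m dephase Y = diag_mx d *m diag_mx d.
  apply/matrixP => i j; rewrite mul_mx_diag !mxE.
  under eq_bigr => k _ do rewrite !mxE.
  rewrite (bigD1 i) //= eqxx mul1r big1 ?addr0; last first.
    by move=> k /negPf ->; rewrite mul0r conjC0 mul0r.
  case: eqVneq => [<-|_]; last by rewrite mul0r mulr0 mulr0n mul0r.
  by rewrite mul1r mulr1n -expr2 normCKC.
have tr_d : \tr (diag_mx d) = (\sum_i complex.Re `|Y i i|)%:C%C.
  rewrite mxtrace_diag rmorph_sum; apply: eq_bigr => i _.
  by rewrite mxE; apply/esym/RRe_real/normr_real.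
apply: xget_unique; first by exists (diag_mx d); split; [exact: psd_diag_mx|].
move=> t [S [S_psd [SS tr_S]]]; apply: complexI; rewrite tr_S -tr_d.
apply: eq_bigr => j _; rewrite (psd_sqrt_diag S_psd d_ge0 _ j) ?SS //.
by rewrite [RHS]mxE eqxx mulr1n.
Qed.

End PositiveSemidefinite.

Section Ancilla.
Variable R : realType.
Local Notation C := R[i].

Lemma sum_mxtens_index (V : nmodType) m k (F : 'I_(m * k) -> V) :
  \sum_p F p = \sum_(b < m) \sum_(c < k) F (mxtens_index (b, c)).
Proof.
rewrite pair_big /= (reindex (@mxtens_index m k)) /=; last first.
  by exists (@mxtens_unindex m k) => x _; rewrite ?mxtens_indexK ?mxtens_unindexK.
by apply: eq_bigr => -[b c] _.
Qed.

Definition ancilla_ket m k (c : 'I_k) : 'M[C]_(m * k, m) :=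
  \matrix_(p, i) (p == mxtens_index (i, c))%:R.

Lemma ancilla_ket_isometry m k (c : 'I_k) :
  adj (ancilla_ket m c) *m ancilla_ket m c = 1%:M.
Proof.
apply/matrixP => i j; rewrite !mxE (bigD1 (mxtens_index (i, c))) //= big1.
  rewrite !mxE eqxx conjC1 mul1r addr0 (inj_eq (can_inj (@mxtens_indexK _ _))).
  by rewrite xpair_eqE eqxx andbT.
by move=> p /negPf pi; rewrite !mxE pi conjC0 mul0r.
Qed.

Lemma blkE m k (X : 'M[C]_(m * k)) (c c' : 'I_k) :
  blk X c c' = adj (ancilla_ket m c) *m X *m ancilla_ket m c'.
Proof.
apply/matrixP => i j; rewrite !mxE (bigD1 (mxtens_index (j, c'))) //= big1.
  rewrite !mxE eqxx mulr1 addr0 (bigD1 (mxtens_index (i, c))) //= big1.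
    by rewrite !mxE eqxx conjC1 mul1r addr0.
  by move=> p /negPf pi; rewrite !mxE pi conjC0 mul0r.
by move=> q /negPf qj; rewrite [ancilla_ket _ _ _ _]mxE qj mulr0.
Qed.

Lemma blk_psd m k (X : 'M[C]_(m * k)) c : psd X -> psd (blk X c c).
Proof. by rewrite blkE; exact: psd_adj_mulmx. Qed.

Lemma mxtrace_blk m k (X : 'M[C]_(m * k)) : \tr X = \sum_c \tr (blk X c c).
Proof.
rewrite /mxtrace sum_mxtens_index exchange_big; apply: eq_bigr => c _.
by apply: eq_bigr => b _; rewrite mxE.
Qed.

Lemma tens_id_diag m n k (Phi : 'M[C]_m -> 'M[C]_n) (X : 'M[C]_(m * k)) b c :
  tens_id Phi X (mxtens_index (b, c)) (mxtens_index (b, c)) = Phi (blk X c c) b b.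
Proof. by rewrite mxE mxtens_indexK. Qed.

Lemma mxtrace_tens_id m n k (Phi : 'M[C]_m -> 'M[C]_n) (X : 'M[C]_(m * k)) :
  \tr (tens_id Phi X) = \sum_c \tr (Phi (blk X c c)).
Proof.
rewrite /mxtrace sum_mxtens_index exchange_big; apply: eq_bigr => c _.
by apply: eq_bigr => b _; rewrite tens_id_diag.
Qed.

Definition ancilla_embed m k (c : 'I_k) (rho : 'M[C]_m) : 'M[C]_(m * k) :=
  ancilla_ket m c *m rho *m adj (ancilla_ket m c).

Lemma blk_ancilla_embed m k (c : 'I_k) (rho : 'M[C]_m) :
  blk (ancilla_embed c rho) c c = rho.
Proof.
by rewrite blkE !mulmxA ancilla_ket_isometry mul1mx -mulmxA ancilla_ket_isometry mulmx1.
Qed.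

Lemma psd_ancilla_embed m k (c : 'I_k) (rho : 'M[C]_m) :
  psd rho -> psd (ancilla_embed c rho).
Proof. exact: psd_mulmx_adj. Qed.

Lemma is_state_ancilla_embed m k (c : 'I_k) (rho : 'M[C]_m) :
  is_state rho -> is_state (ancilla_embed c rho).
Proof.
case=> rho_psd tr_rho; split; first exact: psd_ancilla_embed.
by rewrite mxtrace_mulC mulmxA ancilla_ket_isometry mul1mx.
Qed.

End Ancilla.

Arguments ancilla_embed {R m k} c rho.

Section Channels.
Variable R : realType.
Local Notation C := R[i].

Variables (m n : nat) (Phi : 'M[C]_m -> 'M[C]_n).
Hypothesis Phi_chan : is_channel Phi.

Lemma channel_diag_ge0 (rho : 'M[C]_m) b : psd rho -> 0 <= Phi rho b b.
Proof.
have [_ [_ Phi_cp]] := Phi_chan.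
move=> /(psd_ancilla_embed (ord0 : 'I_1))/Phi_cp/(psd_diag_ge0 (mxtens_index (b, ord0))).
by rewrite tens_id_diag blk_ancilla_embed.
Qed.

Lemma mxtrace_tens_id_channel k (X : 'M[C]_(m * k)) : \tr (tens_id Phi X) = \tr X.
Proof.
have [_ [Phi_tp _]] := Phi_chan.
by rewrite mxtrace_tens_id mxtrace_blk; apply: eq_bigr => c _; exact: Phi_tp.
Qed.

End Channels.

Section TopEigenvector.
Variable R : realType.
Local Notation C := R[i].

Lemma mxtrace_repr n (l : 'M[C]_n -> C) :
  {morph l : u v / u + v} -> (forall a u, l (a *: u) = a * l u) ->
  exists K : 'M[C]_n, forall X, l X = \tr (K *m X).
Proof.
move=> lD lZ; exists (\matrix_(j, i) l (delta_mx i j)) => X.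
have l0 : l 0 = 0 by rewrite -(scale0r 0) lZ mul0r.
rewrite {1}(matrix_sum_delta X) (big_morph l lD l0).
under eq_bigr => i _ do rewrite (big_morph l lD l0).
rewrite /mxtrace exchange_big; apply: eq_bigr => i _.
by rewrite mxE; apply: eq_bigr => j _; rewrite lZ mxE mulrC.
Qed.

Lemma mxtrace_mul_proj n (H : 'M[C]_n) (u : 'cV[C]_n) :
  \tr (H *m proj u) = (adj u *m H *m u) 0 0.
Proof. by rewrite /proj mulmxA mxtrace_mulC mulmxA /mxtrace big_ord1. Qed.

Lemma herm_top_eigenvector n (H : 'M[C]_n) : (0 < n)%N -> adj H = H ->
  exists2 u : 'cV[C]_n, unit_vec u &
    forall rho, psd rho -> \tr (H *m rho) <= (adj u *m H *m u) 0 0 * \tr rho.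
Proof.
move=> n_gt0 H_herm.
have H_hermsym : H \is hermsymmx.
  by apply/is_hermitianmxP; rewrite expr0 scale1r -{1}H_herm adjE map_trmx.
set P := spectralmx H; set D := spectral_diag H.
have P_inv : invmx P = adj P.
  by rewrite invmx_unitary ?spectral_unitarymx // adjE map_trmx.
have PP : P *m adj P = 1%:M by rewrite -P_inv mulmxV ?spectral_unit.
have PP' : adj P *m P = 1%:M by rewrite -P_inv mulVmx ?spectral_unit.
have HD : H = adj P *m diag_mx D *m P.
  by rewrite -P_inv; apply/orthomx_spectralP/hermitian_normalmx.
have D_real i : D 0 i \is Num.real.
  by move: (hermitian_spectral_diag_real H_hermsym) => /mxOverP.
have [i0 _ D_max] := @real_arg_maxP C 'I_n (Ordinal n_gt0) predT (D 0) isT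
  (fun i _ => D_real i).
set u : 'cV[C]_n := adj P *m delta_mx i0 0.
have form_u : (adj u *m H *m u) 0 0 = D 0 i0.
  rewrite adjM adjK HD !mulmxA -(mulmxA _ P) PP mulmx1 -(mulmxA _ P) PP mulmx1.
  by rewrite form_delta mxE eqxx mulr1n.
exists u => [|rho rho_psd].
  rewrite /unit_vec adjM adjK !mulmxA -(mulmxA _ P) PP mulmx1.
  by rewrite -(mulmx1 (adj _)) form_delta mxE eqxx.
have -> : \tr rho = \tr (P *m rho *m adj P) by rewrite mxtrace_mulC mulmxA PP' mul1mx.
rewrite form_u HD -!mulmxA mxtrace_mulC -!mulmxA mul_diag_mx !mulmxA /mxtrace.
rewrite mulr_sumr; apply: ler_sum => i _; rewrite mxE.
by apply: ler_wpM2r; [exact/psd_diag_ge0/psd_mulmx_adj | exact: D_max].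
Qed.

Lemma Re_mxtrace_mul_herm n (K rho : 'M[C]_n) : adj rho = rho ->
  (complex.Re (\tr (K *m rho)))%:C%C = \tr (2^-1 *: (K + adj K) *m rho).
Proof.
move=> rho_herm; rewrite ReJ_add -scalemxAl mxtraceZ mulmxDl mxtraceD.
by rewrite -[in adj K *m rho]rho_herm -adjM mxtrace_adj mxtrace_mulC mulrC.
Qed.

Lemma Re_mxtrace_le_top n (K : 'M[C]_n) : (0 < n)%N ->
  exists2 u : 'cV[C]_n, unit_vec u &
    forall rho, psd rho ->
      complex.Re (\tr (K *m rho)) <=
      complex.Re (\tr (K *m proj u)) * complex.Re (\tr rho).
Proof.
move=> n_gt0; set H := 2^-1 *: (K + adj K).
have H_herm : adj H = H by rewrite adjZ adjD adjK fmorphV rmorph_nat addrC.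
have [u u_unit u_top] := herm_top_eigenvector n_gt0 H_herm.
exists u => // rho rho_psd.
have tr_real : (complex.Re (\tr rho))%:C%C = \tr rho.
  exact/RRe_real/ger0_real/mxtrace_psd_ge0.
rewrite -lecR rmorphM /= tr_real !Re_mxtrace_mul_herm ?rho_psd.1 //.
  by rewrite mxtrace_mul_proj; exact: u_top.
by rewrite /proj adjM adjK.
Qed.

End TopEigenvector.

Section IncoherentMeasurement.
Variable R : realType.
Local Notation C := R[i].

Lemma convex_le_max (mu x y : R) : 0 <= mu <= 1 ->
  mu * x + (1 - mu) * y <= Num.max x y.
Proof. by case/andP=> mu_ge0 mu_le1; case: (lerP x y) => xy; nra. Qed.

Lemma indicator_mix_max (x y : R) :
  ((y <= x)%R)%:R * x + (1 - ((y <= x)%R)%:R) * y = Num.max x y.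
Proof. by case: (lerP y x) => xy /=; ring. Qed.

Lemma Re_mxtrace_diag_mul k (M X : 'M[C]_k) : psd M -> is_diag_mx M ->
  complex.Re (\tr (M *m X)) = \sum_p complex.Re (M p p) * complex.Re (X p p).
Proof.
move=> M_psd /is_diag_mxP M_diag; rewrite /mxtrace Re_sum; apply: eq_bigr => p _.
rewrite mxE (bigD1 p) //= big1 ?addr0; first exact/Re_diag_mul/ger0_Im/psd_diag_ge0.
by move=> q qp; rewrite M_diag ?mul0r // eq_sym.
Qed.

Definition diag_indicator N (P : pred 'I_N) : 'M[C]_N := diag_mx (\row_p (P p)%:R).

Lemma incoherent_povm_indicator N (P : pred 'I_N) :
  incoherent_povm (diag_indicator P) (diag_indicator (predC P)).
Proof.
have psd_indicator (Q : pred 'I_N) : psd (diag_indicator Q).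
  by apply: psd_diag_mx => p; rewrite mxE ler0n.
split; [exact: psd_indicator | split; [exact: psd_indicator |]].
rewrite /diag_indicator; split; [exact: diag_mx_is_diag | split; [exact: diag_mx_is_diag |]].
by apply/matrixP => i j; rewrite !mxE /=; case: (P i); case: (i == j); rewrite ?addr0 ?add0r.
Qed.

Section Povm.
Variables (N : nat) (M0 M1 : 'M[C]_N).
Hypothesis povm : incoherent_povm M0 M1.

Lemma incoherent_povm_complement p : M1 p p = 1 - M0 p p.
Proof.
have [_ [_ [_ [_ M01]]]] := povm.
by move/matrixP/(_ p p): M01; rewrite !mxE eqxx mulr1n => <-; rewrite addrC addrK.
Qed.

Lemma incoherent_povm_diag_bounds p : 0 <= complex.Re (M0 p p) <= 1.
Proof.
have [M0_psd [M1_psd _]] := povm.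
have := Re_ge0 (psd_diag_ge0 p M1_psd).
by rewrite incoherent_povm_complement ReB subr_ge0 Re_ge0 ?psd_diag_ge0.
Qed.

End Povm.

Variables (n m : nat) (lam : R) (T0 T1 : 'M[C]_n -> 'M[C]_m).

Local Notation w0 sigma p := (lam * complex.Re (tens_id T0 sigma p p)).
Local Notation w1 sigma p := ((1 - lam) * complex.Re (tens_id T1 sigma p p)).

Lemma success_incoherent k (sigma : 'M[C]_(n * k)) (M0 M1 : 'M[C]_(m * k)) :
  incoherent_povm M0 M1 ->
  success lam T0 T1 sigma M0 M1 =
  \sum_p (complex.Re (M0 p p) * w0 sigma p + (1 - complex.Re (M0 p p)) * w1 sigma p).
Proof.
move=> povm; have [M0_psd [M1_psd [M0_diag [M1_diag _]]]] := povm.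
rewrite /success !Re_mxtrace_diag_mul // !mulr_sumr -big_split /=.
by apply: eq_bigr => p _; rewrite (incoherent_povm_complement povm) ReB /=; ring.
Qed.

Lemma success_incoherent_le k (sigma : 'M[C]_(n * k)) (M0 M1 : 'M[C]_(m * k)) :
  incoherent_povm M0 M1 ->
  success lam T0 T1 sigma M0 M1 <= \sum_p Num.max (w0 sigma p) (w1 sigma p).
Proof.
move=> povm; rewrite success_incoherent //; apply: ler_sum => p _.
by apply: convex_le_max; exact: incoherent_povm_diag_bounds povm p.
Qed.

Lemma success_indicator_max k (sigma : 'M[C]_(n * k)) :
  let P := [pred p | w1 sigma p <= w0 sigma p] in
  success lam T0 T1 sigma (diag_indicator P) (diag_indicator (predC P)) =
  \sum_p Num.max (w0 sigma p) (w1 sigma p).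
Proof.
move=> P; rewrite (success_incoherent _ (incoherent_povm_indicator P)).
apply: eq_bigr => p _; rewrite mxE eqxx mulr1n mxE -indicator_mix_max inE.
by case: (_ <= _); rewrite /= ?mulr1n ?mulr0n.
Qed.

End IncoherentMeasurement.

Arguments diag_indicator {R N} P.

Section Discrimination.
Variable R : realType.
Local Notation C := R[i].
Variables (n m : nat) (Th0 Th1 : 'M[C]_n -> 'M[C]_m) (lam : R).
Hypotheses (Th0_chan : is_channel Th0) (Th1_chan : is_channel Th1).

Definition bias_map (X : 'M[C]_n) : 'M[C]_m :=
  lam%:C%C *: Th0 X - (1 - lam)%:C%C *: Th1 X.

Definition bias b X := complex.Re (bias_map X b b).

Lemma biasE b X :
  bias b X = lam * complex.Re (Th0 X b b) - (1 - lam) * complex.Re (Th1 X b b).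
Proof. by rewrite /bias !mxE ReB !Re_realM. Qed.

Lemma bias_map_diag_real X b : psd X -> bias_map X b b = (bias b X)%:C%C.
Proof.
move=> X_psd; have real_diag (Phi : 'M[C]_n -> 'M[C]_m) : is_channel Phi ->
    Phi X b b = (complex.Re (Phi X b b))%:C%C.
  by move=> Phi_chan; rewrite RRe_real // ger0_real // channel_diag_ge0.
rewrite biasE !mxE {1}(real_diag _ Th0_chan) {1}(real_diag _ Th1_chan).
by rewrite -!rmorphM -rmorphB.
Qed.

Lemma trace_norm_dephase_bias X : psd X ->
  trace_norm (dephase (bias_map X)) = \sum_b `|bias b X|.
Proof.
move=> X_psd; rewrite trace_norm_dephase; apply: eq_bigr => b _.
by rewrite bias_map_diag_real // normc_real.
Qed.

Lemma bias_mapD X Y : bias_map (X + Y) = bias_map X + bias_map Y.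
Proof.
rewrite /bias_map !(linear_propD Th0_chan.1, linear_propD Th1_chan.1) !scalerDr.
by rewrite opprD addrACA.
Qed.

Lemma bias_mapZ a X : bias_map (a *: X) = a *: bias_map X.
Proof.
rewrite /bias_map (linear_propZ Th0_chan.1) (linear_propZ Th1_chan.1).
by rewrite scalerBr !scalerA ![_ * a]mulrC.
Qed.

Definition signed_bias (s : {ffun 'I_m -> bool}) X : C :=
  \sum_b (-1) ^+ s b * bias_map X b b.

Lemma Re_signed_bias s X :
  complex.Re (signed_bias s X) = \sum_b (-1) ^+ s b * bias b X.
Proof.
rewrite Re_sum; apply: eq_bigr => b _.
by case: (s b); rewrite ?expr0 ?expr1 ?mul1r ?mulN1r ?ReN.
Qed.

Lemma Re_signed_bias_le s X : complex.Re (signed_bias s X) <= \sum_b `|bias b X|.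
Proof.
rewrite Re_signed_bias; apply: ler_sum => b _.
by case: (s b); rewrite ?expr0 ?expr1 ?mul1r ?mulN1r ?ler_norm // -normrN ler_norm.
Qed.

Lemma Re_signed_bias_sign X :
  complex.Re (signed_bias [ffun b => bias b X < 0] X) = \sum_b `|bias b X|.
Proof.
rewrite Re_signed_bias; apply: eq_bigr => b _; rewrite ffunE.
by case: ltP => [/ltr0_norm|/ger0_norm] ->; rewrite ?expr1 ?mulN1r ?expr0 ?mul1r.
Qed.

Definition input_value (u : 'cV[C]_n) : R := \sum_b `|bias b (proj u)|.

Lemma exists_optimal_input : (0 < n)%N ->
  exists2 psi0, unit_vec psi0 &
    forall X, psd X -> \sum_b `|bias b X| <= input_value psi0 * complex.Re (\tr X).
Proof.
move=> n_gt0.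
have top s : exists u, unit_vec u /\ forall rho, psd rho ->
    complex.Re (signed_bias s rho) <=
    complex.Re (signed_bias s (proj u)) * complex.Re (\tr rho).
  have [K K_repr] : exists K, forall X, signed_bias s X = \tr (K *m X).
    apply: mxtrace_repr => [X Y|a X].
      by rewrite /signed_bias -big_split; apply: eq_bigr => b _; rewrite bias_mapD mxE mulrDr.
    by rewrite /signed_bias mulr_sumr; apply: eq_bigr => b _; rewrite bias_mapZ mxE mulrCA.
  have [u u_unit u_top] := Re_mxtrace_le_top K n_gt0.
  by exists u; split=> // rho; rewrite !K_repr; exact: u_top.
have [U U_top] := fin_all_exists top.
have [s0 _ s0_max] := @arg_maxP _ R _ [ffun=> false] predT (input_value \o U) isT.
exists (U s0) => [|X X_psd]; first by case: (U_top s0).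
rewrite -Re_signed_bias_sign; apply: le_trans ((U_top _).2 X X_psd) _.
apply/ler_wpM2r/(le_trans (Re_signed_bias_le _ _))/s0_max => //.
exact/Re_ge0/mxtrace_psd_ge0.
Qed.

Local Notation w0 sigma p := (lam * complex.Re (tens_id Th0 sigma p p)).
Local Notation w1 sigma p := ((1 - lam) * complex.Re (tens_id Th1 sigma p p)).

Lemma sum_max_weights k (sigma : 'M[C]_(n * k)) : is_state sigma ->
  \sum_p Num.max (w0 sigma p) (w1 sigma p) =
  1 / 2 + 1 / 2 * \sum_c \sum_b `|bias b (blk sigma c c)|.
Proof.
case=> _ tr_sigma.
have sum_w : \sum_p (w0 sigma p + w1 sigma p) = 1.
  rewrite big_split /= -!mulr_sumr -!Re_sum.
  rewrite -![\sum_i tens_id _ _ i i]/(\tr _) !mxtrace_tens_id_channel // tr_sigma /=; ring.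
have sum_dw : \sum_p `|w0 sigma p - w1 sigma p| = \sum_c \sum_b `|bias b (blk sigma c c)|.
  rewrite sum_mxtens_index exchange_big; apply: eq_bigr => c _.
  by apply: eq_bigr => b _; rewrite !tens_id_diag biasE.
under eq_bigr do rewrite maxr_absE.
by rewrite -mulr_suml big_split /= sum_w sum_dw; field.
Qed.

Lemma success_le k (sigma : 'M[C]_(n * k)) (M0 M1 : 'M[C]_(m * k)) (g : R) :
  is_state sigma -> incoherent_povm M0 M1 ->
  (forall X, psd X -> \sum_b `|bias b X| <= g * complex.Re (\tr X)) ->
  success lam Th0 Th1 sigma M0 M1 <= 1 / 2 + 1 / 2 * g.
Proof.
move=> sigma_state povm g_bound.
apply: le_trans (success_incoherent_le _ _ _ _ povm) _.
rewrite sum_max_weights // lerD2l ler_wpM2l ?divr_ge0 //.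
apply: le_trans (ler_sum _ (fun c _ => g_bound _ (blk_psd c sigma_state.1))) _.
by rewrite -mulr_sumr -Re_sum -mxtrace_blk sigma_state.2 mulr1.
Qed.

Lemma success_attains (rho : 'M[C]_n) : is_state rho ->
  exists k (sigma : 'M[C]_(n * k)) (M0 M1 : 'M[C]_(m * k)),
    is_state sigma /\ incoherent_povm M0 M1 /\
    1 / 2 + 1 / 2 * \sum_b `|bias b rho| = success lam Th0 Th1 sigma M0 M1.
Proof.
move=> rho_state; set sigma := ancilla_embed (ord0 : 'I_1) rho.
have sigma_state : is_state sigma by exact: is_state_ancilla_embed.
pose P := [pred p | w1 sigma p <= w0 sigma p].
exists 1%N, sigma, (diag_indicator P), (diag_indicator (predC P)).
split=> //; split; first exact: incoherent_povm_indicator.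
by rewrite success_indicator_max sum_max_weights // big_ord1 blk_ancilla_embed.
Qed.

End Discrimination.

Theorem proposition17 (R : realType) (dA dB : nat) (hA : (0 < dA)%N) (hB : (0 < dB)%N)
  (Theta0 Theta1 : 'M[R[i]]_dA -> 'M[R[i]]_dB) (lam : R)
  (h0 : is_channel Theta0) (h1 : is_channel Theta1)
  (hlam0 : 0 <= lam) (hlam1 : lam <= 1) :
  let T := fun X : 'M[R[i]]_dA =>
             dephase ((lam%:C)%C *: Theta0 X - ((1 - lam)%:C)%C *: Theta1 X) in
  exists psi0 : 'cV[R[i]]_dA,
    unit_vec psi0 /\
    (forall psi : 'cV[R[i]]_dA, unit_vec psi ->
        trace_norm (T (proj psi)) <= trace_norm (T (proj psi0))) /\
    Pc lam Theta0 Theta1 = 1 / 2 + 1 / 2 * trace_norm (T (proj psi0)).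
Proof.
move=> T.
have trace_norm_T psi : trace_norm (T (proj psi)) = input_value Theta0 Theta1 lam psi.
  exact: trace_norm_dephase_bias (psd_proj psi).
have [psi0 psi0_unit psi0_opt] := exists_optimal_input lam h0 h1 hA.
have psi0_state : is_state (proj psi0) by split; [exact: psd_proj | rewrite mxtrace_proj].
exists psi0; split; first exact: psi0_unit.
split=> [psi psi_unit|].
  apply: (@le_trans _ _ (input_value Theta0 Theta1 lam psi)); first by rewrite trace_norm_T.
  rewrite [trace_norm _]trace_norm_T; apply: le_trans (psi0_opt _ (psd_proj psi)) _.
  by rewrite mxtrace_proj (psi_unit : _ = 1) mulr1.
rewrite [trace_norm _]trace_norm_T; apply: sup_eq_max.
  apply: (success_attains lam h0 h1 psi0_state).
move=> _ [k [sigma [M0 [M1 [sigma_state [povm ->]]]]]].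
exact: (success_le h0 h1 sigma_state povm psi0_opt).
Qed.
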